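(* In the Shepp--Olkin setting with $p_i'\ge0$ for all $i$ and $v=\sum_ip_i'>0$, for every $t$ and every $k\in\{0,\ldots,n-1\}$ with $f_k(t)>0$ and $f_{k+1}(t)>0$, the coefficients $$\alpha_k(t)=\frac{\sum_{i=1}^np_i'p_i(t)f_{k-1}^{(i)}(t)}{vf_k(t)}$$ satisfy $\alpha_k(t)\le\alpha_{k+1}(t)$.
   Context: Shepp--Olkin setting: $p_1,\ldots,p_n:[0,1]\to[0,1]$ are affine functions with constant derivatives $p_i'$. $f_k(t)$, $k=0,\ldots,n$, is the probability mass function of a sum of independent Bernoulli variables with parameters $p_1(t),\ldots,p_n(t)$; $f^{(i)}_k(t)$ is the mass function of the sum omitting the $i$-th variable (extended by $0$ outside $\{0,\ldots,n-1\}$). *)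

(* the statement is algebraic at a fixed t. *)
From HB Require Import structures.
From mathcomp Require Import all_boot all_order all_algebra.
Set Implicit Arguments. Unset Strict Implicit. Unset Printing Implicit Defensive.
Import Order.TTheory GRing.Theory Num.Theory.
Local Open Scope ring_scope.

(* Probability that a sum of independent Bernoulli(q j), j : 'I_n, equals k. *)
Definition bern_pmf (R : realFieldType) (n : nat) (q : 'I_n -> R) (k : nat) : R :=
  \sum_(A : {set 'I_n} | #|A| == k)
     (\prod_(j in A) q j) * \prod_(j in ~: A) (1 - q j).

Definition bern_pmf_omit (R : realFieldType) (n : nat) (q : 'I_n -> R)
    (i : 'I_n) (k : nat) : R :=
  \sum_(A : {set 'I_n} | (i \notin A) && (#|A| == k))
     (\prod_(j in A) q j) * \prod_(j in ~: A :\ i) (1 - q j).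

(* f^{(i)}_{k-1}, extended by 0 at k-1 = -1. *)
Definition bern_pmf_omit_pred (R : realFieldType) (n : nat) (q : 'I_n -> R)
    (i : 'I_n) (k : nat) : R :=
  if k is k'.+1 then bern_pmf_omit q i k' else 0.

(* Affine functions p_i(s) = a_i + b_i s, with derivative p_i' = b_i. *)
Definition affp (R : realFieldType) (n : nat) (a b : 'I_n -> R) (s : R) : 'I_n -> R :=
  fun i => a i + b i * s.

Definition alpha (R : realFieldType) (n : nat) (a b : 'I_n -> R) (t : R) (k : nat) : R :=
  (\sum_(i < n) b i * affp a b t i * bern_pmf_omit_pred (affp a b t) i k)
  / ((\sum_(i < n) b i) * bern_pmf (affp a b t) k).

From HB Require Import structures.
From mathcomp Require Import all_boot all_order all_algebra.
From mathcomp Require Import ring lra zify.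
Import Order.TTheory GRing.Theory Num.Theory.
Local Open Scope ring_scope.
Set Implicit Arguments. Unset Strict Implicit.

(* Write q = p(t).  The law of a sum of independent Bernoulli(q j) has generating
   polynomial  prod_j (q j X + 1 - q j), so f_k is its k-th coefficient, and
   omitting the i-th variable amounts to setting q i = 0.  Splitting off the i-th
   factor gives  f_k = q_i f^(i)_(k-1) + (1 - q_i) f^(i)_k.

   The coefficient sequence of such a product is "totally positive of order 2"
   (TP2): nonnegative with  g(a-s) g(b+s) <= g(a) g(b)  for a <= b, s >= 0,
   a property preserved by multiplication with any c X + d, c, d >= 0; in
   particular f^(i) is log-concave.  Together with the splitting identity this
   gives, for each i,  f^(i)_(k-1) f_(k+1) <= f^(i)_k f_k, and summing these with
   the nonnegative weights p_i' p_i(t) yields alpha_k <= alpha_(k+1) after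
   clearing the positive denominators. *)

Section TP2Sequences.
Variable R : realFieldType.

(* Coefficients of a polynomial indexed by integers, zero at negative indices;
   this makes shifted indices such as m - 1 harmless. *)
Definition coefz (p : {poly R}) (m : int) : R :=
  if m is Posz k then p`_k else 0.

Lemma coefz_neg (p : {poly R}) (m : int) : m < 0 -> coefz p m = 0.
Proof. by case: m. Qed.

Lemma coefz_linM (c d : R) (p : {poly R}) (m : int) :
  coefz ((c%:P * 'X + d%:P) * p) m = c * coefz p (m - 1) + d * coefz p m.
Proof.
rewrite mulrDl -mulrA.
case: m => [[|k]|k].
- by rewrite [coefz p _]coefz_neg //= coefD coefCM coefXM coefCM mulr0 add0r.
- have -> : Posz k.+1 - 1 = Posz k by lia.
  by rewrite /= coefD coefCM coefXM coefCM.
- by rewrite !coefz_neg ?mulr0 ?addr0 //; lia.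
Qed.

Definition tp2 (p : {poly R}) : Prop :=
  (forall m, 0 <= coefz p m) /\
  (forall a b s : int, a <= b -> 0 <= s ->
     coefz p (a - s) * coefz p (b + s) <= coefz p a * coefz p b).

Lemma tp2_1 : tp2 1.
Proof.
have c1 m : coefz 1 m = if m == 0 then 1 else 0.
  by case: m => [[|k]|k] //=; rewrite coef1.
split=> [m|a b s hab hs]; first by rewrite c1; case: ifP.
rewrite !c1.
by case: (a =P 0); case: (b =P 0); case: (a - s =P 0); case: (b + s =P 0) => *;
  rewrite ?mulr1 ?mul1r ?mul0r ?mulr0 //; lia.
Qed.

(* The mixed term arising when a TP2 sequence is convolved with a two-term one. *)
Lemma tp2_cross (p : {poly R}) (a b s : int) : tp2 p -> a <= b -> 0 <= s ->
  coefz p (a - s) * coefz p (b + s - 1) + coefz p (a - s - 1) * coefz p (b + s)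
  <= coefz p a * coefz p (b - 1) + coefz p (a - 1) * coefz p b.
Proof.
move=> [_ Htp] hab hs; set g := coefz p.
have shift_left : g (a - s - 1) * g (b + s) <= g (a - 1) * g b.
  have := Htp (a - 1) b s.
  have -> : a - 1 - s = a - s - 1 by ring.
  by apply; lia.
have [lt_ab|eq_ab] : a < b \/ a = b by lia.
  have shift_right : g (a - s) * g (b + s - 1) <= g a * g (b - 1).
    have := Htp a (b - 1) s.
    have -> : b - 1 + s = b + s - 1 by ring.
    by apply; lia.
  exact: lerD.
subst b; have [->|s_gt0] : s = 0 \/ 0 < s by lia.
  by rewrite (_ : a - 0 = a) ?lexx //; lia.
have shift_both : g (a - s) * g (a + s - 1) <= g (a - 1) * g a.
  have := Htp (a - 1) a (s - 1).
  have -> : a - 1 - (s - 1) = a - s by ring.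
  have -> : a + (s - 1) = a + s - 1 by ring.
  by apply; lia.
rewrite [g a * _]mulrC addrC; exact: lerD.
Qed.

Lemma tp2_linM (c d : R) (p : {poly R}) :
  0 <= c -> 0 <= d -> tp2 p -> tp2 ((c%:P * 'X + d%:P) * p).
Proof.
move=> hc hd Hp; have [Hnn Htp] := Hp.
split=> [m|a b s hab hs]; first by rewrite coefz_linM addr_ge0 // mulr_ge0.
rewrite !coefz_linM; set g := coefz p.
have Hll : g (a - s - 1) * g (b + s - 1) <= g (a - 1) * g (b - 1).
  have := Htp (a - 1) (b - 1) s.
  have -> : a - 1 - s = a - s - 1 by ring.
  have -> : b - 1 + s = b + s - 1 by ring.
  by apply; lia.
have Hrr := Htp a b s hab hs.
have Hlr := tp2_cross Hp hab hs.
rewrite -subr_ge0.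
have -> : (c * g (a - 1) + d * g a) * (c * g (b - 1) + d * g b)
    - (c * g (a - s - 1) + d * g (a - s)) * (c * g (b + s - 1) + d * g (b + s))
  = c * c * (g (a - 1) * g (b - 1) - g (a - s - 1) * g (b + s - 1))
    + d * d * (g a * g b - g (a - s) * g (b + s))
    + c * d * (g a * g (b - 1) + g (a - 1) * g b
               - (g (a - s) * g (b + s - 1) + g (a - s - 1) * g (b + s))) by ring.
by rewrite !addr_ge0 // !mulr_ge0 // subr_ge0.
Qed.

End TP2Sequences.

Section BernoulliSums.
Variable R : realFieldType.

Definition bern_factor (x : R) : {poly R} := x%:P * 'X + (1 - x)%:P.

Definition bern_gen (n : nat) (q : 'I_n -> R) : {poly R} :=
  \prod_(j < n) bern_factor (q j).

Lemma prod_select_factors (n : nat) (q : 'I_n -> R) (J : {set 'I_n}) :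
  \prod_(j < n) (if j \in J then (q j)%:P * 'X else (1 - q j)%:P) =
  ((\prod_(j in J) q j) * \prod_(j in ~: J) (1 - q j))%:P * 'X^#|J|.
Proof.
rewrite (bigID (mem J)) /=.
rewrite (eq_bigr (fun j => (q j)%:P * 'X)); last by move=> j ->.
rewrite [X in _ * X](eq_bigr (fun j => (1 - q j)%:P)); last first.
  by move=> j /negbTE ->.
rewrite big_split /= prodr_const polyCM !rmorph_prod /= [RHS]mulrAC.
by congr (_ * _); apply: eq_bigl => j; rewrite in_setC.
Qed.

Lemma bern_pmf_coef (n : nat) (q : 'I_n -> R) (k : nat) :
  bern_pmf q k = (bern_gen q)`_k.
Proof.
rewrite /bern_gen /bern_factor.
rewrite (@bigA_distr _ _ _ _ _ _ (fun j => (q j)%:P * 'X) (fun j => (1 - q j)%:P)).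
rewrite coef_sum (bigID (fun J : {set 'I_n} => #|J| == k)) /=.
rewrite [X in _ + X]big1 ?addr0; last first.
  by move=> J /negbTE HJ; rewrite prod_select_factors coefCM coefXn eq_sym HJ mulr0.
apply: eq_bigr => J /eqP HJ.
by rewrite prod_select_factors coefCM coefXn HJ eqxx mulr1.
Qed.

Definition zero_at (n : nat) (q : 'I_n -> R) (i : 'I_n) : 'I_n -> R :=
  fun j => if j == i then 0 else q j.

Lemma bern_pmf_omitE (n : nat) (q : 'I_n -> R) (i : 'I_n) (k : nat) :
  bern_pmf_omit q i k = bern_pmf (zero_at q i) k.
Proof.
rewrite /bern_pmf (bigID (fun A : {set 'I_n} => i \in A)) /=.
rewrite big1 ?add0r; last first.
  by move=> A /andP[_ HiA]; rewrite (bigD1 i) //= /zero_at eqxx !mul0r.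
apply: eq_big => [A|A /andP[HiA _]]; first by rewrite andbC.
congr (_ * _).
  apply: eq_bigr => j Hj; rewrite /zero_at.
  by case: eqP => // Eji; move: HiA; rewrite -Eji Hj.
rewrite [RHS](bigD1 i) /=; last by rewrite in_setC.
rewrite /zero_at eqxx subr0 mul1r; apply: eq_big => j; first by rewrite in_setD1 andbC.
by rewrite in_setD1 => /andP[/negbTE -> _].
Qed.

Lemma bern_pmf_omit_predE (n : nat) (q : 'I_n -> R) (i : 'I_n) (m : nat) :
  bern_pmf_omit_pred q i m = coefz (bern_gen (zero_at q i)) (m%:Z - 1).
Proof.
by case: m => [|m] //=; rewrite bern_pmf_omitE bern_pmf_coef subn1.
Qed.

Lemma bern_gen_split (n : nat) (q : 'I_n -> R) (i : 'I_n) :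
  bern_gen q = bern_factor (q i) * bern_gen (zero_at q i).
Proof.
rewrite /bern_gen (bigD1 i) //= [X in _ = _ * X](bigD1 i) //=.
rewrite /zero_at eqxx /bern_factor mul0r subr0 add0r mul1r.
by congr (_ * _); apply: eq_bigr => j /negbTE ->.
Qed.

Lemma bern_pmf_split (n : nat) (q : 'I_n -> R) (i : 'I_n) (m : nat) :
  bern_pmf q m =
  q i * bern_pmf_omit_pred q i m + (1 - q i) * bern_pmf_omit q i m.
Proof.
rewrite bern_pmf_coef (bern_gen_split q i).
rewrite -[_`_m]/(coefz _ m) coefz_linM.
by rewrite bern_pmf_omit_predE bern_pmf_omitE bern_pmf_coef.
Qed.

Lemma tp2_bern_gen (n : nat) (q : 'I_n -> R) :
  (forall j, 0 <= q j <= 1) -> tp2 (bern_gen q).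
Proof.
move=> Hq; apply: big_rec => [|j p _ Hp]; first exact: tp2_1.
have /andP[hq0 hq1] := Hq j.
by apply: tp2_linM; rewrite ?subr_ge0.
Qed.

Lemma bern_pmf_omit_logconcave (n : nat) (q : 'I_n -> R) (i : 'I_n) (m : nat) :
  (forall j, 0 <= q j <= 1) ->
  bern_pmf_omit_pred q i m * bern_pmf_omit q i m.+1
  <= bern_pmf_omit q i m * bern_pmf_omit q i m.
Proof.
move=> Hq; have [_ Htp] : tp2 (bern_gen (zero_at q i)).
  by apply: tp2_bern_gen => j; rewrite /zero_at; case: eqP => _; rewrite ?lexx ?ler01.
have := Htp m m 1 (lexx _) ler01.
rewrite (_ : Posz m + 1 = Posz m.+1); last by lia.
by rewrite bern_pmf_omit_predE !bern_pmf_omitE !bern_pmf_coef.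
Qed.

(* The ratio f^(i)_(k-1) / f_k is nondecreasing in k, in cross-multiplied form. *)
Lemma bern_omit_ratio_mono (n : nat) (q : 'I_n -> R) (i : 'I_n) (k : nat) :
  (forall j, 0 <= q j <= 1) ->
  bern_pmf_omit_pred q i k * bern_pmf q k.+1
  <= bern_pmf_omit_pred q i k.+1 * bern_pmf q k.
Proof.
move=> Hq; have LC := bern_pmf_omit_logconcave i k Hq.
have /andP[_ hq1] := Hq i.
rewrite (bern_pmf_split q i k.+1) (bern_pmf_split q i k) /= -subr_ge0.
set P := bern_pmf_omit_pred q i k.
set g0 := bern_pmf_omit q i k; set g1 := bern_pmf_omit q i k.+1.
have -> : g0 * (q i * P + (1 - q i) * g0) - P * (q i * g0 + (1 - q i) * g1)
  = (1 - q i) * (g0 * g0 - P * g1) by ring.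
by rewrite mulr_ge0 // subr_ge0.
Qed.

End BernoulliSums.

Theorem proposition5p2 (R : realFieldType) (n : nat) (a b : 'I_n -> R)
  (hrange : forall (i : 'I_n) (s : R), 0 <= s <= 1 -> 0 <= affp a b s i <= 1)
  (hderiv : forall i : 'I_n, 0 <= b i)
  (hv : 0 < \sum_(i < n) b i)
  (t : R) (ht : 0 <= t <= 1) (k : nat) (hk : (k < n)%N)
  (hfk : 0 < bern_pmf (affp a b t) k)
  (hfk1 : 0 < bern_pmf (affp a b t) k.+1) :
  alpha a b t k <= alpha a b t k.+1.
Proof.
rewrite /alpha; set q := affp a b t; set V := \sum_(i < n) b i.
have Hq j : 0 <= q j <= 1 by exact: hrange.
set N1 := \sum_(i < n) _; set N2 := \sum_(i < n) _.
have HN : N1 * bern_pmf q k.+1 <= N2 * bern_pmf q k.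
  rewrite !mulr_suml; apply: ler_sum => i _.
  have /andP[hq0 _] := Hq i.
  rewrite -!mulrA ler_wpM2l // ler_wpM2l //.
  exact: bern_omit_ratio_mono.
rewrite ler_pdivrMr ?mulr_gt0 // mulrAC ler_pdivlMr ?mulr_gt0 //.
by rewrite mulrCA [N2 * _]mulrCA ler_pM2l.
Qed.
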